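(* Let $h:\mathbb{R}^n\to\mathbb{R}$ be continuously differentiable and convex with $h^*:=\inf h$ and $\mathcal{X}^*:=\{x:h(x)=h^*\}\neq\emptyset$, and suppose $h$ satisfies the KL inequality. Then: (a) for every $\bar x\in\mathbb{R}^n$ there exist $\rho,\delta>0$ and $\vartheta\in(0,1)$ with $(h(x)-h^* )^\vartheta\le\rho\|\nabla h(x)\|$ for all $x\in B(\bar x;\delta)$; (b) for every compact set $S\subseteq\mathbb{R}^n$ there exist $\vartheta_S\in(0,1)$ and $\rho_S>0$ with $(h(x)-h^* )^{\vartheta_S}\le\rho_S\|\nabla h(x)\|$ for all $x\in S$.
   Context: $h$ satisfies the KL (Kurdyka–Łojasiewicz) inequality if for every $x^*\in\mathcal{X}^*$ there exist $\rho,\delta>0$ and $\vartheta\in(0,1)$ such that $(h(x)-h^* )^\vartheta\le\rho\|\nabla h(x)\|$ for all $x\in B(x^*;\delta)$. *)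

(* R^n is modelled as 'rV[R]_n over an arbitrary realType R. *)
From HB Require Import structures.
From mathcomp Require Import all_boot all_order all_algebra.
From mathcomp Require Import all_classical all_reals all_analysis.
Set Implicit Arguments. Unset Strict Implicit. Unset Printing Implicit Defensive.
Import Order.TTheory GRing.Theory Num.Theory.
Import numFieldNormedType.Exports.
Local Open Scope ring_scope.
Local Open Scope classical_set_scope.

Definition enorm (R : realType) (n : nat) (v : 'rV[R]_n) : R :=
  Num.sqrt (\sum_(i < n) (v 0 i) ^+ 2).

Definition ebasis (R : realType) (n : nat) (i : 'I_n) : 'rV[R]_n := delta_mx 0 i.

Definition grad (R : realType) (n : nat) (h : 'rV[R]_n -> R) (x : 'rV[R]_n) : 'rV[R]_n :=
  \row_(i < n) ('D_(ebasis R i) h x).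

Definition C1 (R : realType) (n : nat) (h : 'rV[R]_n -> R) : Prop :=
  (forall x, differentiable h x) /\
  (forall i : 'I_n, continuous (fun x => 'D_(ebasis R i) h x)).

Definition convex_fun (R : realType) (n : nat) (h : 'rV[R]_n -> R) : Prop :=
  forall (x y : 'rV[R]_n) (t : R), 0 <= t -> t <= 1 ->
    h (t *: x + (1 - t) *: y) <= t * h x + (1 - t) * h y.

Definition eball (R : realType) (n : nat) (c : 'rV[R]_n) (d : R) : set 'rV[R]_n :=
  [set x | enorm (x - c) < d].

Definition KL (R : realType) (n : nat) (h : 'rV[R]_n -> R) (hstar : R) : Prop :=
  forall xs : 'rV[R]_n, h xs = hstar ->
    exists (rho delta theta : R), [/\ 0 < rho, 0 < delta, 0 < theta, theta < 1 &
      forall x, eball xs delta x ->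
        powR (h x - hstar) theta <= rho * enorm (grad h x)].

From HB Require Import structures.
From mathcomp Require Import all_boot all_order all_algebra.
From mathcomp Require Import ring lra.
From mathcomp Require Import all_classical all_reals all_analysis.
Set Implicit Arguments. Unset Strict Implicit. Unset Printing Implicit Defensive.
Import Order.TTheory GRing.Theory Num.Theory.
Import numFieldNormedType.Exports.
Local Open Scope ring_scope.
Local Open Scope classical_set_scope.

(* Near a minimizer the KL inequality is the hypothesis. At any other point
   x, convexity forces grad h x <> 0, since a stationary point of a convex
   function is a global minimizer; by continuity |grad h| is then bounded
   below near x while h - hstar stays bounded, so the inequality holds near x
   with exponent 1/2.
   For a compact S the exponents must be made uniform. Where
   0 <= h - hstar <= M, raising the exponent from theta to any theta' in
   [theta, theta + 1] costs at most a factor 1 + M. Hence near every point the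
   inequality holds with exponent 1 - 1/r and constant r for all large r, and
   a near-covering argument on S produces one r that works on all of S. *)

Section EuclideanNorm.
Variables (R : realType) (n : nat).
Implicit Types (v c : 'rV[R]_n) (d e : R).

Lemma enorm_ge0 v : 0 <= enorm v.
Proof. exact: sqrtr_ge0. Qed.

Lemma entry_le_enorm v j : `|v 0 j| <= enorm v.
Proof.
rewrite /enorm -sqrtr_sqr ler_wsqrtr // (bigD1 j) //= lerDl.
by apply: sumr_ge0 => i _; exact: sqr_ge0.
Qed.

Lemma enorm_le_entries v e : 0 <= e ->
  (forall j, `|v 0 j| <= e) -> enorm v <= n%:R * e.
Proof.
move=> e0 ve; have ne0 : 0 <= n%:R * e :> R by apply: mulr_ge0.
rewrite /enorm -(ger0_norm ne0) -sqrtr_sqr ler_wsqrtr //.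
apply: le_trans (_ : \sum_(i < n) e ^+ 2 <= _).
  apply: ler_sum => i _; rewrite -real_normK ?num_real //.
  by rewrite lerXn2r ?nnegrE // (le_trans _ (ve i)).
rewrite sumr_const card_ord exprMn -[X in X <= _]mulr_natl.
apply: ler_wpM2r; first exact: sqr_ge0.
rewrite -natrX ler_nat; case: n {v ve ne0} => // m.
by rewrite expnS leq_pmulr // expn_gt0.
Qed.

Lemma nbhs_eball c (A : set 'rV[R]_n) :
  nbhs c A -> exists2 d, 0 < d & eball c d `<=` A.
Proof.
move=> /nbhs_ballP[e e0 ballA]; exists e => // x cx; apply: ballA.
split => // i j; rewrite /ball /= (ord1 i) -normrN opprB.
by apply: le_lt_trans cx; have := entry_le_enorm (x - c) j; rewrite !mxE.
Qed.

Lemma eball_nbhs c d : 0 < d -> nbhs c (eball c d).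
Proof.
move=> d0; have n1 : 0 < n.+1%:R :> R by rewrite ltr0n.
apply/nbhs_ballP; exists (d / n.+1%:R); first by rewrite /= divr_gt0.
move=> x [_ cx]; rewrite /eball /=.
have dn0 : 0 <= d / n.+1%:R by rewrite divr_ge0 ?ltW.
have entries_le j : `|(x - c) 0 j| <= d / n.+1%:R.
  by rewrite !mxE distrC ltW //; exact: cx.
apply: le_lt_trans (enorm_le_entries dn0 entries_le) _.
by rewrite mulrCA gtr_pMr // ltr_pdivrMr // mul1r ltr_nat.
Qed.

End EuclideanNorm.

Section ConvexGradient.
Variables (R : realType) (n : nat) (h : 'rV[R]_n -> R).

Lemma derive_partialsE x v : differentiable h x ->
  'D_v h x = \sum_(i < n) v 0 i * 'D_(ebasis R i) h x.
Proof.
move=> hx; rewrite deriveE // {1}(matrix_sum_delta v) big_ord1 linear_sum.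
by apply: eq_bigr => i _; rewrite linearZ /= deriveE.
Qed.

Lemma convex_derive_le x y : convex_fun h -> differentiable h x ->
  'D_(y - x) h x <= h y - h x.
Proof.
move=> hconv hx; set v := y - x.
have dq := cvg_dnbhs_at_right (diff_derivable (v := v) hx).
apply: (cvgr_to_le dq); near=> t => /=.
have t0 : 0 < t by near: t; exact: nbhs_right_gt.
have t1 : t <= 1 by near: t; exact: nbhs_right_le ltr01.
have := hconv y x t (ltW t0) t1.
have -> : t *: y + (1 - t) *: x = t *: v + x.
  by rewrite /v; apply/rowP => j; rewrite !mxE; ring.
rewrite /shift /= -[t^-1 *: _]/(t^-1 * _) ler_pdivrMl // mulrBr.
lra.
Unshelve. all: by end_near.
Qed.

Lemma convex_grad0_min x y : convex_fun h -> differentiable h x ->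
  grad h x = 0 -> h x <= h y.
Proof.
move=> hconv hx g0; rewrite -subr_ge0.
apply: le_trans (convex_derive_le y hconv hx); rewrite derive_partialsE //.
rewrite big1 // => i _.
by have := congr1 (fun g : 'rV_n => g 0 i) g0; rewrite !mxE => ->; rewrite mulr0.
Qed.

End ConvexGradient.

Section PowerBounds.
Variable R : realType.
Implicit Types a s t : R.

Lemma powR_le1D a t : 0 <= a -> 0 <= t <= 1 -> a `^ t <= 1 + a.
Proof.
move=> a0 /andP[t_ge0 t_le1]; have [a1|a1] := leP 1 a.
  by apply: le_trans (ler1_powR a1 t_le1) _; rewrite lerDr.
apply: (@le_trans _ _ 1); last by rewrite lerDl.
have [->|an0] := eqVneq a 0; first by rewrite /powR eqxx; case: (t == 0).
by rewrite -[leRHS](powRr0 a) ger_powR // lt_neqAle eq_sym an0 a0 ltW.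
Qed.

Lemma powR_le_mul1D a s t : 0 <= a -> 0 < s <= t -> t <= s + 1 ->
  a `^ t <= (1 + a) * a `^ s.
Proof.
move=> a0 /andP[s0 st] ts; rewrite -(subrKC s t) powRD; last first.
  by rewrite subrKC gt_eqF // (lt_le_trans s0 st).
by rewrite mulrC ler_wpM2r ?powR_ge0 // powR_le1D // subr_ge0 st /= lerBlDl.
Qed.

End PowerBounds.

Section KLExtension.
Variables (R : realType) (n : nat) (h : 'rV[R]_n -> R) (hstar : R).
Hypotheses (hC1 : C1 h) (hconv : convex_fun h) (hlb : forall x, hstar <= h x).
Hypotheses (hXne : exists x, h x = hstar) (hKL : KL h hstar).

Definition KL_ineq (theta rho : R) (x : 'rV[R]_n) : Prop :=
  powR (h x - hstar) theta <= rho * enorm (grad h x).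

Lemma near_lt_succ xbar : \forall x \near xbar, h x < h xbar + 1.
Proof.
have hx := differentiable_continuous (hC1.1 xbar).
by apply: (cvgr_lt _ hx); rewrite ltrDl.
Qed.

Lemma grad_entry_continuous i : continuous (fun x => grad h x 0 i).
Proof.
have -> : (fun x => grad h x 0 i) = 'D_(ebasis R i) h.
  by apply/funext => x; rewrite mxE.
exact: hC1.2.
Qed.

Lemma KL_near_noncritical xbar : h xbar != hstar ->
  exists2 rho, 0 < rho & \forall x \near xbar, KL_ineq 2^-1 rho x.
Proof.
move=> hne; have [xs hxs] := hXne.
have gne0 : grad h xbar != 0.
  apply: contra_neq hne => g0; apply/le_anti; rewrite hlb andbT -hxs.
  exact: convex_grad0_min (hC1.1 xbar) g0.
have [i gi0] : exists i, grad h xbar 0 i != 0.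
  apply: contrapT => /forallNP gi0; apply/(negP gne0)/eqP/rowP => i.
  by rewrite [RHS]mxE; apply/eqP/negbNE/negP/gi0.
set c := `|grad h xbar 0 i|; set M := h xbar - hstar + 1.
have c0 : 0 < c by rewrite normr_gt0.
have M0 : 0 < M by have := hlb xbar; rewrite /M; lra.
have near_g : \forall x \near xbar, c / 2 < `|grad h x 0 i|.
  apply: (cvgr_gt _ (cvg_norm (@grad_entry_continuous i xbar))).
  by rewrite gtr_pMr // invf_lt1 // ltr1n.
exists (2 * (1 + M) / c); first by rewrite !mulr_gt0 ?invr_gt0 //; lra.
near=> x.
have a0 : 0 <= h x - hstar by rewrite subr_ge0.
have aM : h x - hstar <= M.
  have : h x < h xbar + 1 by near: x; exact: near_lt_succ.
  rewrite /M; lra.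
apply: le_trans (powR_le1D a0 _) _; first by rewrite invr_ge0 ler0n invf_le1 ?ler1n.
apply: le_trans (_ : 1 + M <= _); first by rewrite lerD2l.
have g_ge : c / 2 <= enorm (grad h x).
  by apply: le_trans (entry_le_enorm _ i); apply: ltW; near: x.
have rho_c : 2 * (1 + M) / c * (c / 2) = 1 + M by field; rewrite gt_eqF.
by rewrite -[leLHS]rho_c ler_wpM2l // !mulr_ge0 ?invr_ge0 //; lra.
Unshelve. all: by end_near.
Qed.

Lemma KL_near (xbar : 'rV[R]_n) :
  exists theta rho, [/\ 0 < theta, theta < 1, 0 < rho &
    \forall x \near xbar, KL_ineq theta rho x].
Proof.
have [hcrit|hne] := eqVneq (h xbar) hstar.
  have [rho [delta [theta [rho0 delta0 theta0 theta1 kl]]]] := hKL hcrit.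
  by exists theta, rho; split => //; exact: filterS kl (eball_nbhs _ delta0).
have [rho rho0 kl] := KL_near_noncritical hne.
by exists 2^-1, rho; split; rewrite ?invr_gt0 ?invf_lt1 ?ltr1n.
Qed.

Lemma KL_near_large_exponent (xbar : 'rV[R]_n) :
  \forall x \near xbar & r \near +oo, KL_ineq (1 - r^-1) r x.
Proof.
have [theta [rho [theta0 theta1 rho0 kl]]] := KL_near xbar.
set M := h xbar - hstar + 1.
exists ([set x | KL_ineq theta rho x /\ h x < h xbar + 1],
        [set r | Num.max (1 - theta)^-1 ((1 + M) * rho) < r]).
  split; first exact: filterI kl (near_lt_succ xbar).
  exact: nbhs_pinfty_gt (num_real _).
move=> [x r] /= [[klx hx]]; rewrite gt_max => /andP[rtheta rM].
have theta'0 : 0 < (1 - theta)^-1 by rewrite invr_gt0 subr_gt0.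
have r0 : 0 < r := lt_trans theta'0 rtheta.
have rV0 : 0 < r^-1 by rewrite invr_gt0.
have rVtheta : r^-1 < 1 - theta by rewrite -[1 - theta]invrK ltf_pV2 ?posrE.
have a0 : 0 <= h x - hstar by rewrite subr_ge0.
have theta_le : 0 < theta <= 1 - r^-1 by apply/andP; split => //; lra.
have le_theta1 : 1 - r^-1 <= theta + 1 by lra.
rewrite /KL_ineq in klx *; apply: le_trans (powR_le_mul1D a0 theta_le le_theta1) _.
apply: le_trans (_ : (1 + M) * (rho * enorm (grad h x)) <= _).
  by apply: ler_pM; rewrite ?powR_ge0 //; [lra | rewrite /M; lra].
by rewrite mulrA ler_wpM2r ?enorm_ge0 // ltW.
Qed.

End KLExtension.

Theorem theorem3p10 (R : realType) (n : nat) (h : 'rV[R]_n -> R) (hstar : R)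
  (hC1 : C1 h) (hconv : convex_fun h)
  (hlb : forall x, hstar <= h x)          (* hstar = inf h ... *)
  (hXne : exists x, h x = hstar)          (* ... and X* = {x | h x = hstar} is nonempty *)
  (hKL : KL h hstar) :
  (forall xbar : 'rV[R]_n,
     exists (rho delta theta : R), [/\ 0 < rho, 0 < delta, 0 < theta, theta < 1 &
       forall x, eball xbar delta x ->
         powR (h x - hstar) theta <= rho * enorm (grad h x)])
  /\
  (forall S : set 'rV[R]_n, compact S ->
     exists (thetaS rhoS : R), [/\ 0 < thetaS, thetaS < 1, 0 < rhoS &
       forall x, S x -> powR (h x - hstar) thetaS <= rhoS * enorm (grad h x)]).
Proof.
split=> [xbar | S /compact_near_coveringP coverS].
  have [theta [rho [theta0 theta1 rho0 kl]]] := KL_near hC1 hconv hlb hXne hKL xbar.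
  have [delta delta0 ball_kl] := nbhs_eball kl.
  by exists rho, delta, theta.
have kl_S := coverS _ _ (fun r => KL_ineq h hstar (1 - r^-1) r) _
  (fun x _ => KL_near_large_exponent hC1 hconv hlb hXne hKL x).
near (pinfty_nbhs R) => r.
have r1 : 1 < r by near: r; exact: nbhs_pinfty_gt (num_real 1).
exists (1 - r^-1), r; split.
- by rewrite subr_gt0 invf_lt1 // (lt_trans ltr01).
- by rewrite gtrBl invr_gt0 (lt_trans ltr01).
- exact: lt_trans ltr01 r1.
- by near: r; exact: kl_S.
Unshelve. all: by end_near.
Qed.
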